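(* Let $S$ be a monoid and $G_1,G_2$ left $S$-acts such that there exist sets $I,J$ and injective homomorphisms $G_1\rightarrowtail G_2^I$ and $G_2\rightarrowtail G_1^J$. Then $G_1$ and $G_2$ are geometrically equivalent.
   Context: A left $S$-act is a nonempty set with an action $S\times A\to A$ satisfying $1a=a$, $(st)a=s(ta)$; homomorphisms preserve the action; $G^I$ is the cartesian power with componentwise action. For a nonempty finite set $X$, $F_X=\coprod_{x\in X}S_x$ is the free $S$-act on $X$. For an $S$-act $G$ and a relation $T\subseteq F_X\times F_X$, $T'_G=\{\mu:F_X\to G \text{ homomorphism}: T\subseteq\ker\mu\}$ and $T''_G=\bigcap_{\mu\in T'_G}\ker\mu$ (empty intersection $=F_X\times F_X$). $S$-acts $G_1,G_2$ are geometrically equivalent iff $T''_{G_1}=T''_{G_2}$ for all nonempty finite $X$ and all $T\subseteq F_X\times F_X$. *)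

From Stdlib Require Import FinFun.
From Stdlib Require FunctionalExtensionality.

Record monoid := Monoid {
  mcar :> Type;
  mmul : mcar -> mcar -> mcar;
  mone : mcar;
  mmulA : forall a b c, mmul a (mmul b c) = mmul (mmul a b) c;
  mmul1l : forall a, mmul mone a = a;
  mmul1r : forall a, mmul a mone = a
}.

Record lact (S : monoid) := LAct {
  acar :> Type;
  aop : mcar S -> acar -> acar;
  aop1 : forall a, aop (mone S) a = a;
  aopM : forall s t a, aop (mmul S s t) a = aop s (aop t a);
  ane : inhabited acar
}.
Arguments aop {S} _ _ _.
Arguments aop1 {S} _ _.
Arguments aopM {S} _ _ _ _.
Arguments ane {S} _.

Definition is_hom {S : monoid} (A B : lact S) (f : A -> B) : Prop :=
  forall (s : S) (a : A), f (aop A s a) = aop B s (f a).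

Definition power_act {S : monoid} (G : lact S) (I : Type) : lact S.
Proof.
  refine (@LAct S (I -> G) (fun s g i => aop G s (g i)) _ _ _).
  - intros g. apply FunctionalExtensionality.functional_extensionality.
    intros i; apply aop1.
  - intros s t g. apply FunctionalExtensionality.functional_extensionality.
    intros i; apply aopM.
  - destruct (ane G) as [g]. exact (inhabits (fun _ => g)).
Defined.

(* Free S-act on a nonempty set X: F_X = coprod_{x in X} S x, realised as
   S * X with action s (t, x) = (s t, x). *)
Definition free_act (S : monoid) (X : Type) (hX : inhabited X) : lact S.
Proof.
  refine (@LAct S (mcar S * X) (fun s p => (mmul S s (fst p), snd p)) _ _ _).
  - intros [t x]. simpl. rewrite mmul1l. reflexivity.
  - intros s t [u x]. simpl. rewrite mmulA. reflexivity.
  - destruct hX as [x]. exact (inhabits (mone S, x)).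
Defined.

Definition ker {A B : Type} (f : A -> B) : A -> A -> Prop :=
  fun u v => f u = f v.

Definition Tprime {S : monoid} (X : Type) (hX : inhabited X) (G : lact S)
  (T : free_act S X hX -> free_act S X hX -> Prop)
  (mu : free_act S X hX -> G) : Prop :=
  is_hom (free_act S X hX) G mu /\ (forall u v, T u v -> ker mu u v).

(* T''_G : intersection of ker mu over mu in T'_G (empty intersection = everything). *)
Definition Tdprime {S : monoid} (X : Type) (hX : inhabited X) (G : lact S)
  (T : free_act S X hX -> free_act S X hX -> Prop) :
  free_act S X hX -> free_act S X hX -> Prop :=
  fun u v => forall mu : free_act S X hX -> G, Tprime X hX G T mu -> ker mu u v.

Definition geom_equiv {S : monoid} (G1 G2 : lact S) : Prop :=
  forall (X : Type) (hX : inhabited X), Finite X ->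
  forall T : free_act S X hX -> free_act S X hX -> Prop,
  forall u v, Tdprime X hX G1 T u v <-> Tdprime X hX G2 T u v.

From Stdlib Require Import FinFun.
From Stdlib Require Import FunctionalExtensionality.

(* If G1 embeds into a power G2^I, every solution mu : F_X -> G1 of T splits into the
   coordinate solutions pi_i . f . mu into G2; a pair identified by all solutions in G2
   is therefore identified by f . mu, hence by mu since f is injective. So
   T''_{G2} is contained in T''_{G1}, and embeddings in both directions give equality. *)

Lemma is_hom_comp {S : monoid} (A B C : lact S) (f : A -> B) (g : B -> C) :
  is_hom A B f -> is_hom B C g -> is_hom A C (fun a => g (f a)).
Proof.
  intros hf hg s a. rewrite hf, hg. reflexivity.
Qed.

Lemma is_hom_proj {S : monoid} (G : lact S) (I : Type) (i : I) :
  is_hom (power_act G I) G (fun g => g i).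
Proof.
  intros s g. reflexivity.
Qed.

Lemma Tprime_comp {S : monoid} (X : Type) (hX : inhabited X) (G H : lact S)
  (T : free_act S X hX -> free_act S X hX -> Prop)
  (mu : free_act S X hX -> G) (h : G -> H) :
  Tprime X hX G T mu -> is_hom G H h -> Tprime X hX H T (fun w => h (mu w)).
Proof.
  intros [hmu Tmu] hh. split.
  - exact (is_hom_comp _ _ _ mu h hmu hh).
  - intros a b Tab. unfold ker. rewrite (Tmu a b Tab). reflexivity.
Qed.

Lemma Tdprime_of_power_embedding {S : monoid} (G1 G2 : lact S) (I : Type)
  (f : G1 -> power_act G2 I) :
  is_hom G1 (power_act G2 I) f -> Injective f ->
  forall X hX T u v, Tdprime X hX G2 T u v -> Tdprime X hX G1 T u v.
Proof.
  intros hf f_inj X hX T u v Huv mu Tmu.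
  apply f_inj, functional_extensionality. intros i.
  apply (Huv (fun w => f (mu w) i)).
  apply (Tprime_comp X hX G1 G2 T mu (fun g => f g i) Tmu).
  exact (is_hom_comp _ _ _ f (fun g => g i) hf (is_hom_proj G2 I i)).
Qed.

Theorem corollary3p5 (S : monoid) (G1 G2 : lact S) (I J : Type) :
  (exists f : G1 -> power_act G2 I,
      is_hom G1 (power_act G2 I) f /\ Injective f) ->
  (exists g : G2 -> power_act G1 J,
      is_hom G2 (power_act G1 J) g /\ Injective g) ->
  geom_equiv G1 G2.
Proof.
  intros [f [hf f_inj]] [g [hg g_inj]] X hX _ T u v. split.
  - exact (Tdprime_of_power_embedding G2 G1 J g hg g_inj X hX T u v).
  - exact (Tdprime_of_power_embedding G1 G2 I f hf f_inj X hX T u v).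
Qed.
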